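(* Let $n\geq1$, $d\geq2$. For $y,v,w,z\in\mathbb Z_{\geq0}^n$ with entries of each summing to $d-1$ and $y+v=z+w$, the polynomial $$\sum_{s=1}^n\left(u_{y+e_s}u_{v+e_s}-u_{w+e_s}u_{z+e_s}\right)$$ vanishes on the odeco variety in $S^d(\mathbb C^n)$.
   Context: For $T\in S^d(\mathbb C^n)$ and $a=(a_1,\dots,a_n)\in\mathbb Z_{\geq0}^n$ with $a_1+\dots+a_n=d$, the coordinate $u_a$ is $u_a=d!\,T_{1\dots1\,2\dots2\,\dots\,n\dots n}$ where index $j$ is repeated $a_j$ times; $e_s$ is the $s$-th standard basis vector. A real tensor $T\in S^d(\mathbb R^n)$ is odeco if $T=\sum_{i=1}^n\lambda_iv_i^{\otimes d}$ with $v_1,\dots,v_n$ an orthonormal basis of $\mathbb R^n$ and $\lambda_i\in\mathbb R$; the odeco variety is the Zariski closure in $S^d(\mathbb C^n)$ of the set of odeco tensors. *)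

From HB Require Import structures.
From mathcomp Require Import all_boot all_order all_algebra.
From mathcomp Require Import fingroup perm.
From mathcomp Require Import reals.
From mathcomp Require Import complex.
From mathcomp Require Import mpoly.

Set Implicit Arguments.
Unset Strict Implicit.
Unset Printing Implicit Defensive.

Import Order.TTheory GRing.Theory Num.Theory.
Local Open Scope ring_scope.
Local Open Scope complex_scope.

(* Conventions.
   - R : realType is the field of real numbers; C := complex R (= complex R) the complex numbers.
   - A tensor in (C^n)^{\otimes d} is a function {ffun 'I_d -> 'I_n} -> C
     (T f = T_{f 0, ..., f (d-1)}).
   - S^d(C^n) = symmetric tensors (invariant under permuting the d slots).
   - Polynomial functions on the tensor space: multivariate polynomials in the
     #|{ffun 'I_d -> 'I_n}| entries of the tensor. *)

Section Odeco.
Variables (R : realType) (n d : nat).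

Definition tindex := {ffun 'I_d -> 'I_n}.
Definition tensor := {ffun tindex -> complex R}.

Definition is_symmetric (T : tensor) : Prop :=
  forall (s : 'S_d) (f : tindex), T [ffun k => f (s k)] = T f.

Definition nentries := #|{: tindex}|.

Definition peval (p : {mpoly complex R[nentries]}) (T : tensor) : complex R :=
  p.@[fun j : 'I_nentries => T (enum_val (j : 'I_#|{: tindex}|))].

(* real odeco tensors: T = \sum_i lambda_i v_i^{\otimes d}, where the
   v_i are the rows of a real orthogonal matrix V (V V^T = 1). *)
Definition odeco_tensor (lam : 'I_n -> R) (V : 'M[R]_n) : tensor :=
  [ffun f : tindex => ((\sum_(i < n) lam i * \prod_(k < d) V i (f k))%:C)%C].

Definition is_odeco (T : tensor) : Prop :=
  exists (lam : 'I_n -> R) (V : 'M[R]_n),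
    V *m V^T = 1%:M /\ T = odeco_tensor lam V.

Definition zariski_closure (S : tensor -> Prop) (T : tensor) : Prop :=
  is_symmetric T /\
  forall p : {mpoly complex R[nentries]},
    (forall X, S X -> peval p X = 0) -> peval p T = 0.

Definition odeco_variety (T : tensor) : Prop := zariski_closure is_odeco T.

(* The index (1,...,1,2,...,2,...,n,...,n) with j repeated a j times;
   i0 is a default value (irrelevant when \sum_j a j = d). *)
Definition mindex (i0 : 'I_n) (a : 'I_n -> nat) : tindex :=
  [ffun k : 'I_d => nth i0 (flatten [seq nseq (a j) j | j <- enum 'I_n]) k].

Definition ucoord (i0 : 'I_n) (a : 'I_n -> nat) (T : tensor) : complex R :=
  (d`!)%:R * T (mindex i0 a).

Definition add_e (a : 'I_n -> nat) (s : 'I_n) : 'I_n -> nat :=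
  fun j => (a j + (j == s))%N.

End Odeco.

From HB Require Import structures.
From mathcomp Require Import all_boot all_order all_algebra.
From mathcomp Require Import fingroup perm.
From mathcomp Require Import reals.
From mathcomp Require Import complex.
From mathcomp Require Import mpoly.
Import Order.TTheory GRing.Theory Num.Theory.
Local Open Scope ring_scope.

(* For an odeco tensor with orthogonal factor V, the entry at the multi-index
   a + e_s is the s-th coordinate of the vector c_a V, where
   c_a i = lam i * \prod_j V i j ^+ a j.  Summing products of two such
   coordinates over s and using V V^T = 1 gives \sum_i lam i ^+ 2 V_i^(a + b),
   which only depends on a + b.  Hence the quadric vanishes on odeco tensors
   when y + v = z + w, and so on their Zariski closure; it differs from the
   sum of products of the u-coordinates by the constant factor (d!)^2. *)

Lemma sum_mul_orthogonal (K : comPzRingType) (n : nat) (V : 'M[K]_n)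
    (A B : 'I_n -> K) :
  V *m V^T = 1%:M ->
  \sum_(s < n) ((\sum_(i < n) A i * V i s) * (\sum_(k < n) B k * V k s))
  = \sum_(i < n) A i * B i.
Proof.
move=> hV; pose a := \row_i A i; pose b := \row_i B i.
have : (a *m V *m (b *m V)^T) 0 0 = (a *m b^T) 0 0.
  by rewrite trmx_mul mulmxA -(mulmxA a) hV mulmx1.
rewrite !mxE; under eq_bigr do rewrite !mxE; under [RHS]eq_bigr do rewrite !mxE.
move=> <-; apply: eq_bigr => s _.
by congr (_ * _); apply: eq_bigr => i _; rewrite !mxE.
Qed.

Lemma sum_add_e (n : nat) (a : 'I_n -> nat) (s : 'I_n) :
  (\sum_(j < n) add_e a s j)%N = ((\sum_(j < n) a j) + 1)%N.
Proof.
rewrite big_split /=; congr (_ + _)%N.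
by rewrite (bigD1 s) //= eqxx big1 ?addn0 // => j /negbTE ->.
Qed.

Lemma prod_exp_add_e (K : comPzSemiRingType) (n : nat) (F : 'I_n -> K) a s :
  \prod_(j < n) F j ^+ add_e a s j = F s * \prod_(j < n) F j ^+ a j.
Proof.
under eq_bigr do rewrite exprD; rewrite big_split /= mulrC.
by congr (_ * _); rewrite (bigD1 s) //= eqxx expr1 big1 ?mulr1 // => j /negbTE ->.
Qed.

Lemma prod_mindex (K : comPzSemiRingType) (n d : nat) (i0 : 'I_n)
    (a : 'I_n -> nat) (F : 'I_n -> K) :
  (\sum_(j < n) a j)%N = d ->
  \prod_(k < d) F (mindex d i0 a k) = \prod_(j < n) F j ^+ a j.
Proof.
move=> ha; under eq_bigr => k _ do rewrite ffunE.
set word := flatten _.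
have size_word : size word = d.
  rewrite size_flatten /shape -map_comp sumnE big_map -ha -big_enum /=.
  by apply: eq_bigr => j _; rewrite /= size_nseq.
rewrite -(big_mkord xpredT (fun k => F (nth i0 word k))) -{1}size_word.
rewrite -(big_nth i0 xpredT F) big_flatten big_map -big_enum /=.
by apply: eq_bigr => j _; rewrite big_nseq iter_mulr_1.
Qed.

Section OdecoEntries.
Variables (R : realType) (n d : nat) (i0 : 'I_n).
Variables (lam : 'I_n -> R) (V : 'M[R]_n).

Definition odeco_weight (a : 'I_n -> nat) (i : 'I_n) : R :=
  lam i * \prod_(j < n) V i j ^+ a j.

Lemma odeco_tensor_add_e (a : 'I_n -> nat) (s : 'I_n) :
  (\sum_(j < n) a j)%N = (d - 1)%N -> (0 < d)%N ->
  odeco_tensor d lam V (mindex d i0 (add_e a s))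
  = ((\sum_(i < n) odeco_weight a i * V i s)%:C)%C.
Proof.
move=> ha d_gt0; rewrite ffunE; congr (_%:C)%C; apply: eq_bigr => i _.
rewrite (@prod_mindex _ _ d i0 (add_e a s)); last by rewrite sum_add_e ha subnK.
by rewrite prod_exp_add_e mulrA mulrAC.
Qed.

Lemma odeco_weight_mul (a b : 'I_n -> nat) (i : 'I_n) :
  odeco_weight a i * odeco_weight b i
  = lam i ^+ 2 * \prod_(j < n) V i j ^+ (a j + b j).
Proof.
rewrite /odeco_weight mulrACA -big_split /=.
by congr (_ * _); apply: eq_bigr => j _; rewrite exprD.
Qed.

Lemma sum_odeco_tensor_add_e_mul (a b : 'I_n -> nat) :
  V *m V^T = 1%:M ->
  (\sum_(j < n) a j)%N = (d - 1)%N -> (\sum_(j < n) b j)%N = (d - 1)%N ->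
  (0 < d)%N ->
  \sum_(s < n) odeco_tensor d lam V (mindex d i0 (add_e a s))
               * odeco_tensor d lam V (mindex d i0 (add_e b s))
  = ((\sum_(i < n) lam i ^+ 2 * \prod_(j < n) V i j ^+ (a j + b j))%:C)%C.
Proof.
move=> hV ha hb d_gt0.
under eq_bigr do rewrite !odeco_tensor_add_e // -rmorphM.
rewrite -rmorph_sum sum_mul_orthogonal //.
by congr (_%:C)%C; apply: eq_bigr => i _; rewrite odeco_weight_mul.
Qed.

End OdecoEntries.

Section OdecoQuadric.
Variables (R : realType) (n d : nat) (i0 : 'I_n).

Definition coord_poly (a : 'I_n -> nat) : {mpoly (complex R)[nentries n d]} :=
  'X_(enum_rank (mindex d i0 a)).

Lemma peval_coord_poly (a : 'I_n -> nat) (T : tensor R n d) :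
  peval (coord_poly a) T = T (mindex d i0 a).
Proof. by rewrite /peval mevalXU enum_rankK. Qed.

Definition odeco_quadric (y v w z : 'I_n -> nat) :
    {mpoly (complex R)[nentries n d]} :=
  \sum_(s < n) (coord_poly (add_e y s) * coord_poly (add_e v s)
                - coord_poly (add_e w s) * coord_poly (add_e z s)).

Lemma peval_odeco_quadric (y v w z : 'I_n -> nat) (T : tensor R n d) :
  peval (odeco_quadric y v w z) T
  = \sum_(s < n) (T (mindex d i0 (add_e y s)) * T (mindex d i0 (add_e v s))
                  - T (mindex d i0 (add_e w s)) * T (mindex d i0 (add_e z s))).
Proof.
rewrite /peval raddf_sum /=; apply: eq_bigr => s _.
by rewrite mevalB !mevalM -!/(peval _ T) !peval_coord_poly.
Qed.

Lemma odeco_quadric_vanishes (y v w z : 'I_n -> nat) (T : tensor R n d) :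
  (0 < d)%N ->
  (\sum_(i < n) y i)%N = (d - 1)%N -> (\sum_(i < n) v i)%N = (d - 1)%N ->
  (\sum_(i < n) w i)%N = (d - 1)%N -> (\sum_(i < n) z i)%N = (d - 1)%N ->
  (forall i, (y i + v i)%N = (z i + w i)%N) ->
  is_odeco T -> peval (odeco_quadric y v w z) T = 0.
Proof.
move=> d_gt0 hy hv hw hz hyv [lam [V [hV ->]]].
rewrite peval_odeco_quadric sumrB !sum_odeco_tensor_add_e_mul //.
apply/eqP; rewrite subr_eq0; apply/eqP; congr (_%:C)%C.
by apply: eq_bigr => i _; congr (_ * _); apply: eq_bigr => j _; rewrite hyv addnC.
Qed.

End OdecoQuadric.

Theorem lemma3p5 (R : realType) (n d : nat) (hn : (0 < n)%N) (hd : (2 <= d)%N)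
    (y v w z : 'I_n -> nat)
    (hy : (\sum_(i < n) y i)%N = (d - 1)%N)
    (hv : (\sum_(i < n) v i)%N = (d - 1)%N)
    (hw : (\sum_(i < n) w i)%N = (d - 1)%N)
    (hz : (\sum_(i < n) z i)%N = (d - 1)%N)
    (hyv : forall i, (y i + v i)%N = (z i + w i)%N)
    (T : tensor R n d) :
  odeco_variety T ->
  \sum_(s < n)
     (ucoord (Ordinal hn) (add_e y s) T * ucoord (Ordinal hn) (add_e v s) T
      - ucoord (Ordinal hn) (add_e w s) T * ucoord (Ordinal hn) (add_e z s) T)
  = 0.
Proof.
move=> [_ vanish_closure].
have d_gt0 : (0 < d)%N by apply: leq_trans hd.
have := vanish_closure (odeco_quadric R n d (Ordinal hn) y v w z).
rewrite peval_odeco_quadric => quadric0.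
have ucoord_mul a b : ucoord (Ordinal hn) a T * ucoord (Ordinal hn) b T
    = (d`!)%:R ^+ 2 * (T (mindex d (Ordinal hn) a) * T (mindex d (Ordinal hn) b)).
  by rewrite mulrACA expr2.
under eq_bigr do rewrite !ucoord_mul -mulrBr.
by rewrite -mulr_sumr quadric0 ?mulr0 // => X; apply: odeco_quadric_vanishes.
Qed.
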